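(* For all integers $m\ge 1$ and $n\ge0$, $$\sum_{k=0}^{n}\begin{bmatrix}n\\k\end{bmatrix}q^{\binom k2}\,[m+2k]\,\frac{[m+k-1]!}{[m+n+k]!}=\frac{(-1;q)_n}{[m+1]\,[m+3]\cdots[m+2n-1]},$$ the empty product for $n=0$ being $1$. Equivalently, for an indeterminate $a$, $$\sum_{k=0}^{n}\begin{bmatrix}n\\k\end{bmatrix}q^{\binom k2}\frac{1-q^{2k}a}{(q^ka;q)_{n+1}}=\frac{(-1;q)_n}{(qa;q^2)_n}.$$
   Context: $q$ is an indeterminate; $[n]=\frac{1-q^n}{1-q}$, $[n]!=[1]\cdots[n]$, $[0]!=1$, $\begin{bmatrix}n\\k\end{bmatrix}=\frac{[n]!}{[k]![n-k]!}$; $(a;q)_n=(1-a)(1-qa)\cdots(1-q^{n-1}a)$, $(a;q)_0=1$. *)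

From HB Require Import structures.
From mathcomp Require Import all_boot all_order all_algebra.
Set Implicit Arguments. Unset Strict Implicit. Unset Printing Implicit Defensive.
Import Order.TTheory GRing.Theory Num.Theory.
Local Open Scope ring_scope.

Definition Qq := {fraction {poly rat}}.
Definition qvar : Qq := @tofrac _ ('X : {poly rat}).

Section QDefs.
Variable F : fieldType.
Variable q : F.

Definition qint (n : nat) : F := (1 - q ^+ n) / (1 - q).
Definition qfact (n : nat) : F := \prod_(1 <= i < n.+1) qint i.
Definition qbinom (n k : nat) : F := qfact n / (qfact k * qfact (n - k)).
Definition qpoch (a : F) (n : nat) : F := \prod_(i < n) (1 - q ^+ i * a).
End QDefs.

(* Wilf–Zeilberger creative telescoping.  With [m = p + 1], summand [F n k] and
   sum [S n], the certificate [G] below satisfies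
     [m + 2n + 1] F (n+1) k - (1 + q^n) F n k = G n k - G n (k-1)   (0 <= k <= n+1)
   with [G n (-1) = G n (n+1) = 0], so [m + 2n + 1] S (n+1) = (1 + q^n) S n.
   As [S 0 = 1] and [(-1;q)_(n+1) = (1 + q^n) (-1;q)_n], induction on [n] gives the
   closed form. *)
From HB Require Import structures.
From mathcomp Require Import all_boot all_order all_algebra.
From mathcomp Require Import ring zify.
Import GRing.Theory.
Local Open Scope ring_scope.
Set Implicit Arguments. Unset Strict Implicit. Unset Printing Implicit Defensive.

Section QIdentities.
Variable F : fieldType.
Variable q : F.
Hypothesis q_not_root1 : forall i, (0 < i)%N -> 1 - q ^+ i != 0.

Lemma subr1q_neq0 : 1 - q != 0.
Proof. by rewrite -{1}(expr1 q) q_not_root1. Qed.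

Lemma qfact0 : qfact q 0 = 1.
Proof. by rewrite /qfact big_geq. Qed.

Lemma qfactS i : qfact q i.+1 = qfact q i * qint q i.+1.
Proof. by rewrite /qfact big_nat_recr. Qed.

Lemma qint_neq0 i : (0 < i)%N -> qint q i != 0.
Proof. by move=> i_gt0; rewrite mulf_neq0 ?invr_eq0 ?subr1q_neq0 ?q_not_root1. Qed.

Lemma qfact_neq0 i : qfact q i != 0.
Proof.
elim: i => [|i IH]; first by rewrite qfact0 oner_neq0.
by rewrite qfactS mulf_neq0 ?qint_neq0.
Qed.

(* Expand all powers of [q] for [field], then fold its side conditions back into [1 - q ^+ e.+1 != 0]. *)
Local Ltac qfield :=
  rewrite /qint !mul2n -!addnn !addSn !addnS !exprS !exprD ?addn0 ?addn1 ?exprS ?expr0 ?expr1;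
  field; rewrite -!exprD -!exprS !q_not_root1 // subr1q_neq0 !qfact_neq0.

Variable p : nat.

Definition wz_summand n k :=
  qbinom q n k * q ^+ 'C(k, 2) * qint q (p.+1 + 2 * k)
    * (qfact q (p.+1 + k - 1) / qfact q (p.+1 + n + k)).

Definition wz_certificate n k :=
  - (q ^+ n * q ^+ 'C(k, 2) * qint q (p.+1 + 2 * k + 1) * qbinom q n k
       * (qfact q (p.+1 + k) / qfact q (p.+1 + n + k + 1))).

Definition wz_sum n := \sum_(0 <= k < n.+1) wz_summand n k.

Lemma wz_summand_rec0 n :
  qint q (p.+1 + 2 * n + 1) * wz_summand n.+1 0 - (1 + q ^+ n) * wz_summand n 0
  = wz_certificate n 0.
Proof.
rewrite /wz_summand /wz_certificate /qbinom.
have -> : (p.+1 + n.+1 + 0 = (p + n).+2)%N by lia.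
have -> : (p.+1 + n + 0 + 1 = (p + n).+2)%N by lia.
have -> : (p.+1 + n + 0 = (p + n).+1)%N by lia.
have -> : (p.+1 + 0 - 1 = p)%N by lia.
rewrite addn0 !subn0 !bin0n !qfactS qfact0.
by qfield.
Qed.

Lemma wz_summand_recS j r (n := (j + r).+1) :
  qint q (p.+1 + 2 * n + 1) * wz_summand n.+1 j.+1 - (1 + q ^+ n) * wz_summand n j.+1
  = wz_certificate n j.+1 - wz_certificate n j.
Proof.
rewrite /n /wz_summand /wz_certificate /qbinom.
have -> : (p.+1 + (j + r).+1 + j.+1 + 1 = (p + j + j + r).+4)%N by lia.
have -> : (p.+1 + (j + r).+1 + j + 1 = (p + j + j + r).+3)%N by lia.
have -> : (p.+1 + (j + r).+2 + j.+1 = (p + j + j + r).+4)%N by lia.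
have -> : (p.+1 + (j + r).+1 + j.+1 = (p + j + j + r).+3)%N by lia.
have -> : (p.+1 + j.+1 - 1 = (p + j).+1)%N by lia.
have -> : (p.+1 + j.+1 = (p + j).+2)%N by lia.
have -> : (p.+1 + j = (p + j).+1)%N by lia.
have -> : ((j + r).+2 - j.+1 = r.+1)%N by lia.
have -> : ((j + r).+1 - j.+1 = r)%N by lia.
have -> : ((j + r).+1 - j = r.+1)%N by lia.
rewrite !binS !bin1 !qfactS.
by qfield.
Qed.

Lemma wz_summand_rec_top n :
  qint q (p.+1 + 2 * n + 1) * wz_summand n.+1 n.+1 = - wz_certificate n n.
Proof.
rewrite /wz_summand /wz_certificate /qbinom.
have -> : (p.+1 + n.+1 + n.+1 = (p + n + n).+3)%N by lia.
have -> : (p.+1 + n + n + 1 = (p + n + n).+2)%N by lia.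
have -> : (p.+1 + n.+1 - 1 = (p + n).+1)%N by lia.
have -> : (p.+1 + n = (p + n).+1)%N by lia.
rewrite !subnn !binS !bin1 !qfactS qfact0.
by qfield.
Qed.

Lemma wz_sum_rec n :
  qint q (p.+1 + 2 * n + 1) * wz_sum n.+1 = (1 + q ^+ n) * wz_sum n.
Proof.
rewrite /wz_sum big_nat_recr //= mulrDr wz_summand_rec_top !mulr_sumr.
apply/eqP; rewrite -subr_eq0 addrAC -sumrB.
rewrite (@telescope_sumr_eq _ 0 n.+1 (fun k => if k is k'.+1 then wz_certificate n k' else 0)) //.
  by rewrite subr0 subrr.
move=> [_|j /andP[_ lt_jn]]; first by rewrite subr0 wz_summand_rec0.
have [r ->] : exists r, n = (j + r).+1 by exists (n - j.+1)%N; lia.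
exact: wz_summand_recS.
Qed.

Lemma wz_sum_closed n :
  wz_sum n = qpoch q (-1) n / \prod_(i < n) qint q (p.+1 + 2 * i + 1).
Proof.
elim: n => [|n IHn].
  rewrite /wz_sum big_nat1 /qpoch !big_ord0 /wz_summand /qbinom subn0.
  rewrite muln0 !addn0 subSS subn0 qfactS qfact0 expr0 !mul1r invr1 mulr1.
  by field; rewrite qfact_neq0 qint_neq0.
have c_neq0 : qint q (p.+1 + 2 * n + 1) != 0 by rewrite qint_neq0 // addn1.
apply: (mulfI c_neq0); rewrite wz_sum_rec IHn /qpoch !big_ord_recr /=.
have prod_neq0 : \prod_(i < n) qint q (p.+1 + 2 * i + 1) != 0.
  by apply/prodf_neq0 => i _; rewrite qint_neq0 // addn1.
move: (\prod_(i < n) _) (\prod_(i < n) qint q _) prod_neq0 => a b b_neq0.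
by field; rewrite b_neq0 c_neq0.
Qed.

End QIdentities.

Lemma qvar_not_root1 i : (0 < i)%N -> 1 - qvar ^+ i != 0.
Proof.
move=> i_gt0; rewrite /qvar -tofrac1 -tofracXn -tofracB tofrac_eq0.
apply/eqP => /(congr1 (fun x : {poly rat} => x`_0)).
rewrite coefB coef1 coefXn coef0 eqxx eq_sym (gtn_eqF i_gt0) subr0.
by move/eqP; rewrite oner_eq0.
Qed.

Theorem mainTheorem15 (m n : nat) (hm : (1 <= m)%N) :
  \sum_(0 <= k < n.+1)
     qbinom qvar n k * qvar ^+ 'C(k, 2) * qint qvar (m + 2 * k)
       * (qfact qvar (m + k - 1) / qfact qvar (m + n + k))
  = qpoch qvar (-1) n / \prod_(i < n) qint qvar (m + 2 * i + 1).
Proof.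
case: m hm => [//|p] _.
exact: wz_sum_closed qvar_not_root1 p n.
Qed.
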